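(* Let $G$ be a symmetric finite discounted stochastic game, let $\epsilon \ge 0$, and let $\bm{\gamma} \in \bm{\Delta}$ be a joint stationary policy. If $i, j \in \mathcal{N}$ satisfy $\gamma^i = \gamma^j$, then $\gamma^i$ is an $\epsilon$-best-response to $\bm{\gamma}^{-i}$ if and only if $\gamma^j$ is an $\epsilon$-best-response to $\bm{\gamma}^{-j}$.
   Context: A finite discounted stochastic game is $G = (\mathcal{N}, \mathbb{X}, \{\mathbb{U}^i\}, \{c^i\}, \{\beta^i\}, P, \nu_0)$, with finite player set $\mathcal{N}$, finite state set $\mathbb{X}$, finite action sets $\mathbb{U}^i$, joint action set $\textbf{U}=\times_i\mathbb{U}^i$, stage costs $c^i:\mathbb{X}\times\textbf{U}\to\mathbb{R}$, discount factors $\beta^i\in[0,1)$, transition kernel $P(\cdot\mid x,\textbf{u})$ and initial distribution $\nu_0$. A stationary policy of player $i$ is a stochastic kernel $\gamma^i$ from $\mathbb{X}$ to $\mathbb{U}^i$ (actions $u^i_t\sim\gamma^i(\cdot\mid x_t)$, independently across players given the state); $\Delta^i$ is the set of these, $\bm{\Delta}=\times_i\Delta^i$, and $\bm{\gamma}^{-i}=(\gamma^k)_{k\neq i}$. Player $i$'s cost is $J^i_x(\bm{\gamma}) = E^{\bm{\gamma}}[\sum_{t\ge0}(\beta^i)^t c^i(x_t,\textbf{u}_t)\mid x_0=x]$. $\gamma^i$ is an $\epsilon$-best-response to $\bm{\gamma}^{-i}$ if $J^i_x(\gamma^i,\bm{\gamma}^{-i}) \le \inf_{\pi^i\in\Delta^i}J^i_x(\pi^i,\bm{\gamma}^{-i})+\epsilon$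 for all $x\in\mathbb{X}$. The game is symmetric if $\mathbb{U}^i=\mathbb{U}^j$, $\beta^i=\beta^j$ for all $i,j$, and for every permutation $\sigma$ of $\mathcal{N}$, every $i$, $x$ and joint action $\textbf{a}$: $c^i(x,\sigma(\textbf{a}))=c^{\sigma(i)}(x,\textbf{a})$ and $P(\cdot\mid x,\textbf{a})=P(\cdot\mid x,\sigma(\textbf{a}))$, where the $i$-th component of $\sigma(\textbf{a})$ is $a^{\sigma(i)}$. *)

From HB Require Import structures.
From mathcomp Require Import all_boot all_order all_algebra all_fingroup.
From mathcomp Require Import all_classical all_reals all_analysis.
Set Implicit Arguments. Unset Strict Implicit. Unset Printing Implicit Defensive.
Import Order.TTheory GRing.Theory Num.Theory.
Import numFieldNormedType.Exports.
Local Open Scope ring_scope.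
Local Open Scope classical_set_scope.

Section Game.
Variables (R : realType) (N X A : finType).
(* N: players, X: states, A: common action set (symmetric games have
   U^i = U^j for all i, j). Joint actions are {ffun N -> A}. *)

Definition jact := {ffun N -> A}.

Record game := Game {
  cost : N -> X -> jact -> R;
  disc : N -> R;
  trans : X -> jact -> X -> R;
  init : X -> R
}.

Definition is_game (G : game) : Prop :=
  (forall i, 0 <= disc G i < 1) /\
  (forall x u y, 0 <= trans G x u y) /\
  (forall x u, \sum_(y : X) trans G x u y = 1) /\
  (forall x, 0 <= init G x) /\ \sum_(x : X) init G x = 1.

Definition perm_act (s : {perm N}) (a : jact) : jact := [ffun k => a (s k)].

Definition symmetric_game (G : game) : Prop :=
  (forall i j, disc G i = disc G j) /\
  (forall (s : {perm N}) i x a, cost G i x (perm_act s a) = cost G (s i) x a) /\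
  (forall (s : {perm N}) x a y, trans G x a y = trans G x (perm_act s a) y).

Definition policy := X -> A -> R.
Definition is_policy (g : policy) : Prop :=
  (forall x a, 0 <= g x a) /\ (forall x, \sum_(a : A) g x a = 1).

Definition joint_policy := N -> policy.
Definition is_joint_policy (g : joint_policy) : Prop := forall i, is_policy (g i).

Definition repl (g : joint_policy) (i : N) (p : policy) : joint_policy :=
  fun k => if k == i then p else g k.

Definition jprob (g : joint_policy) (x : X) (a : jact) : R :=
  \prod_(k : N) g k x (a k).

Definition Pg (G : game) (g : joint_policy) (x y : X) : R :=
  \sum_(a : jact) jprob g x a * trans G x a y.

Fixpoint Pt (G : game) (g : joint_policy) (t : nat) (x y : X) : R :=
  match t with
  | 0%N => (x == y)%:R
  | t'.+1 => \sum_(z : X) Pt G g t' x z * Pg G g z y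
  end.

Definition exp_cost (G : game) (g : joint_policy) (i : N) (t : nat) (x : X) : R :=
  \sum_(y : X) Pt G g t x y * \sum_(a : jact) jprob g y a * cost G i y a.

(* J^i_x(g) = E^g[ sum_t (beta^i)^t c^i(x_t,u_t) | x_0 = x ]
   = sum_t (beta^i)^t E^g[c^i(x_t,u_t) | x_0 = x]  (finite costs, beta < 1) *)
Definition Jcost (G : game) (i : N) (g : joint_policy) (x : X) : R :=
  limn (series (fun t => disc G i ^+ t * exp_cost G g i t x)).

Definition eps_best_response (G : game) (eps : R) (g : joint_policy) (i : N) : Prop :=
  forall x : X,
    Jcost G i g x <=
      inf [set Jcost G i (repl g i p) x | p in [set p : policy | is_policy p]] + eps.

End Game.

From HB Require Import structures.
From mathcomp Require Import all_boot all_order all_algebra all_fingroup.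
From mathcomp Require Import all_classical all_reals all_analysis.
Import Order.TTheory GRing.Theory Num.Theory.
Import numFieldNormedType.Exports.
Set Implicit Arguments. Unset Strict Implicit. Unset Printing Implicit Defensive.
Local Open Scope ring_scope.
Local Open Scope classical_set_scope.

(* Relabelling the players of a symmetric game by a permutation s changes
   neither the state process nor the costs, except that player i now pays
   what player s i paid before; hence i best-responds in the relabelled
   profile iff s i does in the original one.  Taking s the transposition of
   i and j, a profile with gamma i = gamma j is fixed by the relabelling. *)

Section PermutePlayers.
Variables (R : realType) (N X A : finType) (G : game R N X A).
Hypothesis symG : symmetric_game G.
Variable s : {perm N}.

Definition perm_policy (g : joint_policy R N X A) : joint_policy R N X A :=
  fun k => g (s k).

Lemma perm_actK : cancel (@perm_act N A s) (@perm_act N A s^-1).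
Proof. by move=> a; apply/ffunP => k; rewrite !ffunE permKV. Qed.

Lemma jprob_perm_policy g x a :
  jprob (perm_policy g) x a = jprob g x (perm_act s^-1 a).
Proof.
rewrite /jprob (reindex_inj (@perm_inj _ s^-1)) /=.
by apply: eq_bigr => k _; rewrite /perm_policy ffunE permKV.
Qed.

Lemma sum_jact_perm_policy g x (F : jact N A -> R) :
  \sum_a jprob (perm_policy g) x a * F a =
  \sum_a jprob g x a * F (perm_act s a).
Proof.
rewrite (reindex_inj (can_inj perm_actK)) /=.
by apply: eq_bigr => a _; rewrite jprob_perm_policy perm_actK.
Qed.

Lemma Pg_perm_policy g x y : Pg G (perm_policy g) x y = Pg G g x y.
Proof.
have [_ [_ trans_perm]] := symG.
rewrite /Pg sum_jact_perm_policy.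
by apply: eq_bigr => a _; rewrite -trans_perm.
Qed.

Lemma Pt_perm_policy g t x y : Pt G (perm_policy g) t x y = Pt G g t x y.
Proof.
elim: t y => [|t IH] y //=.
by apply: eq_bigr => z _; rewrite IH Pg_perm_policy.
Qed.

Lemma exp_cost_perm_policy g k t x :
  exp_cost G (perm_policy g) k t x = exp_cost G g (s k) t x.
Proof.
have [_ [cost_perm _]] := symG.
apply: eq_bigr => y _; rewrite Pt_perm_policy sum_jact_perm_policy.
by under eq_bigr do rewrite cost_perm.
Qed.

Lemma Jcost_perm_policy g k x :
  Jcost G k (perm_policy g) x = Jcost G (s k) g x.
Proof.
have [disc_eq _] := symG.
rewrite /Jcost (disc_eq k (s k)); congr (limn _); apply: funext => n.
by apply: eq_bigr => t _; rewrite exp_cost_perm_policy.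
Qed.

Lemma perm_policy_repl g i p :
  perm_policy (repl g (s i) p) = repl (perm_policy g) i p.
Proof. by apply: funext => k; rewrite /perm_policy /repl (inj_eq perm_inj). Qed.

Lemma eps_best_response_perm_policy eps g i :
  eps_best_response G eps (perm_policy g) i <-> eps_best_response G eps g (s i).
Proof.
have Jrepl p : Jcost G i (repl (perm_policy g) i p) =1 Jcost G (s i) (repl g (s i) p).
  by move=> x; rewrite -perm_policy_repl Jcost_perm_policy.
rewrite /eps_best_response; split=> br x; have := br x;
  by rewrite Jcost_perm_policy (eq_imagel (fun p _ => Jrepl p x)).
Qed.

End PermutePlayers.

Theorem lemma1 (R : realType) (N X A : finType) (G : game R N X A)
    (eps : R) (gamma : joint_policy R N X A) (i j : N) :
  is_game G -> symmetric_game G -> 0 <= eps -> is_joint_policy gamma ->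
  gamma i = gamma j ->
  (eps_best_response G eps gamma i <-> eps_best_response G eps gamma j).
Proof.
move=> _ symG _ _ gamma_ij.
have gamma_fixed : perm_policy (tperm i j) gamma = gamma.
  by apply: funext => k; rewrite /perm_policy; case: tpermP => [->|->|].
have := eps_best_response_perm_policy symG (tperm i j) eps gamma i.
by rewrite gamma_fixed tpermL.
Qed.
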